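(* Let $q:V\to\overline K/\overline R$ be a non-trivial generalized $(\sigma,\varepsilon)$-quadratic form with sesquilinearization $f$, and let $E=(e_i)_{i\in I}$ and $E'=(e'_i)_{i\in I}$ be two bases of $V$ consisting of $q$-singular vectors, indexed by the same totally ordered set $I$. Let $\overline R_{E,E'}$ be the smallest closed subgroup of $\overline K$ containing $\{\overline{g_{E'}(e_i,e_i)}\}_{i\in I}$ and define $\delta_{E,E'}:V\to\overline K$ by $\delta_{E,E'}(x)=\overline{g_E(x,x)}-\overline{g_{E'}(x,x)}$. Then $\overline R_{E,E'}$ is a vector subspace of $(\overline R,\circ)$, $\delta_{E,E'}$ is a surjective $K$-linear map from $V$ onto $\overline R_{E,E'}$ (indeed $\delta_{E,E'}(\sum_i e_i\lambda_i)=-\sum_i\overline{g_{E'}(e_i,e_i)}\circ\lambda_i$), $\delta_{E',E}=-\delta_{E,E'}$ and $\overline R_{E,E'}=\overline R_{E',E}$.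
   Context: $K$ division ring, $(\sigma,\varepsilon)$ admissible pair ($\sigma$ anti-automorphism, $\varepsilon^\sigma\varepsilon=1$, $t^{\sigma^2}=\varepsilon t\varepsilon^{-1}$). $K_{\sigma,\varepsilon}=\{t-t^\sigma\varepsilon\}$, $K^{\sigma,\varepsilon}=\{t:t=-t^\sigma\varepsilon\}$, $\overline K=K/K_{\sigma,\varepsilon}$, $\bar t$ class of $t$, $\bar t\circ\lambda=\overline{\lambda^\sigma t\lambda}$; $K^{\sigma,\varepsilon}/K_{\sigma,\varepsilon}$ is a right $K$-vector space under $\circ$. Closed subgroup: stable under all $\circ\lambda$. Generalized $(\sigma,\varepsilon)$-quadratic form with co-defect closed $\overline R$: $q:V\to\overline K/\overline R$ ($V$ right $K$-vector space) with $q(x\lambda)=q(x)\circ\lambda$ (where $(\bar t+\overline R)\circ\lambda=\bar t\circ\lambda+\overline R$) and trace-valued $(\sigma,\varepsilon)$-sesquilinear $f$ ($f(x\lambda,y\mu)=\lambda^\sigma f(x,y)\mu$, $f(y,x)=f(x,y)^\sigma\varepsilon$, $f(x,x)\in\{t+t^\sigma\varepsilon\}$) with $q(x+y)=q(x)+q(y)+(\overline{f(x,y)}+\overline R)$. For non-trivial $q$, $\overline R$ is a $K$-subspace of $K^{\sigma,\varepsilon}/K_{\sigma,\varepsilon}$. $x$ is $q$-singular if $q(x)=\overline R$. For a basis $E=(e_i)_{i\in I}$ of $q$-singular vectors with $I$ totally ordered, $g_E(\sum_i e_i\lambda_i,\sum_j e_j\mu_j)=\sum_{i<j}\lambda_i^\sigma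 f(e_i,e_j)\mu_j$; it satisfies $q(x)=\overline{g_E(x,x)}+\overline R$. *)

From HB Require Import structures.
From mathcomp Require Import all_boot all_order all_algebra.
From Stdlib Require Import ClassicalEpsilon.
Set Implicit Arguments. Unset Strict Implicit. Unset Printing Implicit Defensive.
Import Order.TTheory GRing.Theory.
Local Open Scope ring_scope.

Definition division_ring (K : unitRingType) : Prop :=
  forall x : K, x != 0 -> x \is a GRing.unit.

(* Right K-vector spaces are left modules over the converse ring K^c;
   x *r l denotes the right scalar multiple x.l *)
Definition rscale (K : unitRingType) (V : lmodType K^c) (x : V) (l : K) : V :=
  (l : K^c) *: x.
Notation "x *r l" := (rscale x l) (at level 40, left associativity).

Section Forms.
Variable K : unitRingType.
Variable sigma : K -> K.
Variable eps : K.

Definition anti_automorphism : Prop :=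
  bijective sigma /\
  (forall a b, sigma (a + b) = sigma a + sigma b) /\
  (forall a b, sigma (a * b) = sigma b * sigma a) /\
  sigma 1 = 1.

Definition admissible_pair : Prop :=
  anti_automorphism /\ sigma eps * eps = 1 /\
  (forall t, sigma (sigma t) = eps * t * eps^-1).

Definition Ksub (t : K) : Prop := exists u, t = u - sigma u * eps.
Definition Ksymm (t : K) : Prop := t = - (sigma t * eps).

(* Equality in Kbar = K / K_{sigma,eps} of the classes of t and u *)
Definition eqKbar (t u : K) : Prop := Ksub (t - u).

(* representative of  bar t o lambda *)
Definition circ (t l : K) : K := sigma l * t * l.

(* Subgroups of Kbar are represented by their preimages in K. *)
Definition closed_subgroup (R : K -> Prop) : Prop :=
  (forall t, Ksub t -> R t) /\
  (forall a b, R a -> R b -> R (a - b)) /\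
  (forall t l, R t -> R (circ t l)).

Definition closed_span (S : K -> Prop) (t : K) : Prop :=
  forall P, closed_subgroup P -> (forall u, S u -> P u) -> P t.

(* S (preimage of a subset of Kbar) is a vector subspace of (Rbar, o), where
   Rbar is a K-subspace of K^{sigma,eps}/K_{sigma,eps}:  S is a subgroup of
   K^{sigma,eps}/K_{sigma,eps} closed under o, contained in Rbar. *)
Definition subspace_of (R S : K -> Prop) : Prop :=
  closed_subgroup S /\ (forall t, S t -> Ksymm t) /\ (forall t, S t -> R t).

Variable V : lmodType K^c.

Definition trace_valued_sesquilinear (f : V -> V -> K) : Prop :=
  (forall x y z, f (x + y) z = f x z + f y z) /\
  (forall x y z, f x (y + z) = f x y + f x z) /\
  (forall x y l m, f (x *r l) (y *r m) = sigma l * f x y * m) /\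
  (forall x y, f y x = sigma (f x y) * eps) /\
  (forall x, exists t, f x x = t + sigma t * eps).

(* Rbar is represented by its
   preimage R in K, and q by a map qr : V -> K with q(x) = class of qr x. *)
Definition gen_quadratic_form (R : K -> Prop) (qr : V -> K) (f : V -> V -> K)
  : Prop :=
  closed_subgroup R /\
  trace_valued_sesquilinear f /\
  (forall x l, R (qr (x *r l) - circ (qr x) l)) /\
  (forall x y, R (qr (x + y) - qr x - qr y - f x y)).

(* q is non-trivial: Rbar <> Kbar (trivial forms are those with Rbar = Kbar,
   i.e. the null forms) *)
Definition nontrivial_codefect (R : K -> Prop) : Prop := exists t, ~ R t.

Definition q_singular (R : K -> Prop) (qr : V -> K) (x : V) : Prop := R (qr x).

Variable d : Order.disp_t.
Variable I : orderType d.

Definition is_basis (E : I -> V) : Prop :=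
  (forall x : V, exists (s : seq I) (c : I -> K),
      x = \sum_(i <- s) E i *r c i) /\
  (forall (s : seq I) (c : I -> K), uniq s ->
      \sum_(i <- s) E i *r c i = 0 -> forall i, i \in s -> c i = 0).

Definition gE_rel (f : V -> V -> K) (E : I -> V) (x y : V) (t : K) : Prop :=
  exists (s : seq I) (l m : I -> K),
    [/\ uniq s,
        x = \sum_(i <- s) E i *r l i,
        y = \sum_(j <- s) E j *r m j &
        t = \sum_(i <- s) \sum_(j <- s | (i < j)%O)
              sigma (l i) * f (E i) (E j) * m j].

Definition gE (f : V -> V -> K) (E : I -> V) (x y : V) : K :=
  epsilon (inhabits 0) (gE_rel f E x y).

Definition R_EE (f : V -> V -> K) (E E' : I -> V) : K -> Prop :=
  closed_span (fun u => exists i, u = gE f E' (E i) (E i)).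

Definition delta (f : V -> V -> K) (E E' : I -> V) (x : V) : K :=
  gE f E x x - gE f E' x x.

End Forms.

From HB Require Import structures.
From mathcomp Require Import all_boot all_order all_algebra.
From Stdlib Require Import ClassicalEpsilon.
Import Order.TTheory GRing.Theory.
Local Open Scope ring_scope.
Set Implicit Arguments. Unset Strict Implicit. Unset Printing Implicit Defensive.

(* Because the basis vectors are singular, f vanishes on the diagonal of each
   basis, hence f(x,y) = g_E(x,y) + g_E(y,x)^sigma eps for either basis.  For
   x = sum e_i l_i, expanding the strictly upper sum g_E(x,x) through g_E' and
   moving its lower half across the trace shows that g_E(x,x) is, modulo
   K_{sigma,eps}, the double sum g_E'(x,x) minus its diagonal; this is the formula
   delta(x) = - sum g_E'(e_i,e_i) o l_i, from which linearity and surjectivity onto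
   Rbar_{E,E'} follow.  The generators g_E'(e_i,e_i) are congruent to q(e_i), so
   lie in Rbar; and Rbar lies in K^{sigma,eps}, since for t in Rbar the
   polarization of l |-> t o l puts (t + t^sigma eps) K inside the proper
   subgroup Rbar.  Finally delta_{E,E'}(e'_i) = g_E(e'_i,e'_i) gives the symmetry
   of Rbar_{E,E'}. *)

Section RightScale.
Variables (K : unitRingType) (V : lmodType K^c).

Lemma rscaleA (x : V) a b : (x *r a) *r b = x *r (a * b).
Proof. by rewrite /rscale scalerA. Qed.
Lemma rscaleDl (x : V) a b : x *r (a + b) = x *r a + x *r b.
Proof. by rewrite /rscale scalerDl. Qed.
Lemma rscaleBl (x : V) a b : x *r (a - b) = x *r a - x *r b.
Proof. by rewrite /rscale scalerBl. Qed.
Lemma rscale1 (x : V) : x *r 1 = x.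
Proof. by rewrite /rscale scale1r. Qed.
Lemma rscale0 (x : V) : x *r 0 = 0.
Proof. by rewrite /rscale scale0r. Qed.

End RightScale.

Lemma addr_shuffle (M : zmodType) (a b c e : M) : a + b + (c + e) = a + e + (b + c).
Proof. by rewrite (addrC c) addrACA. Qed.

Section OrderedDoubleSums.
Variables (d : Order.disp_t) (I : orderType d) (M : zmodType).

Lemma big_mem_mask (s S : seq I) (P : pred I) (F : I -> M) :
  uniq s -> uniq S -> {subset s <= S} ->
  \sum_(i <- S | P i) (if i \in s then F i else 0) = \sum_(i <- s | P i) F i.
Proof.
move=> us uS sub; rewrite -big_mkcondr.
rewrite (eq_bigl (fun i => (i \in s) && P i)); last by move=> i; rewrite andbC.
rewrite -big_filter_cond; apply: perm_big; apply: uniq_perm; rewrite ?filter_uniq //.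
by move=> x; rewrite mem_filter; case: (boolP (x \in s)) => //= /sub ->.
Qed.

Lemma big_split_at (s : seq I) p (F : I -> M) : uniq s -> p \in s ->
  \sum_(q <- s) F q =
  \sum_(q <- s | (p < q)%O) F q + F p + \sum_(q <- s | (q < p)%O) F q.
Proof.
move=> us ps; rewrite (bigD1_seq p) //= (bigID (fun q => (p < q)%O)) /=.
rewrite addrA (addrC (F p)); congr (_ + _ + _); apply: eq_bigl => q.
  by case: ltgtP.
by case: ltgtP.
Qed.

Lemma big_pairs_split (s : seq I) (F : I -> I -> M) : uniq s ->
  \sum_(p <- s) \sum_(q <- s) F p q =
  \sum_(p <- s) \sum_(q <- s | (p < q)%O) F p q + \sum_(p <- s) F p p
  + \sum_(p <- s) \sum_(q <- s | (q < p)%O) F p q.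
Proof. by move=> us; rewrite -!big_split; apply: eq_big_seq => p; apply: big_split_at. Qed.

End OrderedDoubleSums.

Definition eq_mod (K : zmodType) (P : K -> Prop) (a b : K) : Prop := P (a - b).

Section Forms.
Variables (K : unitRingType) (sigma : K -> K) (eps : K).
Hypothesis divK : division_ring K.
Hypothesis adm : admissible_pair sigma eps.

Local Notation Ksub := (Ksub sigma eps).
Local Notation eqKbar := (eqKbar sigma eps).
Local Notation circ := (circ sigma).
Local Notation closed_subgroup := (closed_subgroup sigma eps).

Lemma sigmaD : {morph sigma : a b / a + b}.
Proof. by case: adm => [[_ []]]. Qed.
Lemma sigmaM a b : sigma (a * b) = sigma b * sigma a.
Proof. by case: adm => [[_ [_ []]]]. Qed.
Lemma sigma1 : sigma 1 = 1.
Proof. by case: adm => [[_ [_ [_ ->]]]]. Qed.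
Lemma sigma0 : sigma 0 = 0.
Proof. by apply: (@addrI _ (sigma 0)); rewrite -sigmaD !addr0. Qed.
Lemma sigmaN a : sigma (- a) = - sigma a.
Proof. by apply: (@addrI _ (sigma a)); rewrite -sigmaD !subrr sigma0. Qed.
Lemma sigma_sum (T : Type) (s : seq T) (P : pred T) (F : T -> K) :
  sigma (\sum_(i <- s | P i) F i) = \sum_(i <- s | P i) sigma (F i).
Proof. exact: (big_morph sigma sigmaD sigma0). Qed.

Lemma eps_unit : eps \is a GRing.unit.
Proof.
apply: divK; apply: contraTneq isT => eps0.
by case: adm => _ [+ _]; rewrite eps0 mulr0 => /esym/eqP; rewrite oner_eq0.
Qed.

Lemma sigmaK_eps t : sigma (sigma t) * eps = eps * t.
Proof. by case: adm => _ [_ ->]; rewrite divrK // eps_unit. Qed.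

Lemma sigma_circ_eps a t b :
  sigma (sigma a * t * b) * eps = sigma b * (sigma t * eps) * a.
Proof. by rewrite !sigmaM -!mulrA sigmaK_eps. Qed.

Lemma Ksub_trace t : Ksub (t - sigma t * eps).
Proof. by exists t. Qed.

Lemma circB a b l : circ a l - circ b l = circ (a - b) l.
Proof. by rewrite /circ mulrBr mulrBl. Qed.

Lemma Ksub_closed : closed_subgroup Ksub.
Proof.
split=> [// |]; split=> [_ _ [u ->] [v ->] | t l [u ->]].
  exists (u - v).
  by rewrite sigmaD sigmaN mulrDl mulNr !opprD !opprK addrACA.
exists (sigma l * u * l); rewrite -circB; congr (_ - _).
by rewrite /circ sigma_circ_eps mulrA.
Qed.

Section ClosedSubgroup.
Variable P : K -> Prop.
Hypothesis closedP : closed_subgroup P.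

Lemma csub_Ksub t : Ksub t -> P t.
Proof. by case: closedP => H _; apply: H. Qed.
Lemma csubB a b : P a -> P b -> P (a - b).
Proof. by case: closedP => _ [H _]; apply: H. Qed.
Lemma csub_circ t l : P t -> P (circ t l).
Proof. by case: closedP => _ [_ H]; apply: H. Qed.
Lemma csub0 : P 0.
Proof. by apply: csub_Ksub; exists 0; rewrite sigma0 mul0r subr0. Qed.
Lemma csubN a : P a -> P (- a).
Proof. by move=> Pa; rewrite -sub0r; apply: csubB => //; apply: csub0. Qed.
Lemma csubD a b : P a -> P b -> P (a + b).
Proof. by move=> Pa Pb; rewrite -[b]opprK; apply: csubB => //; apply: csubN. Qed.
Lemma csub_sum (T : Type) (s : seq T) (Q : pred T) (F : T -> K) :
  (forall i, Q i -> P (F i)) -> P (\sum_(i <- s | Q i) F i).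
Proof. by move=> PF; elim/big_ind: _ => //; [apply: csub0 | apply: csubD]. Qed.

Lemma eq_mod_refl a : eq_mod P a a.
Proof. by rewrite /eq_mod subrr; apply: csub0. Qed.
Lemma eq_mod_sym a b : eq_mod P a b -> eq_mod P b a.
Proof. by move=> Pab; rewrite /eq_mod -opprB; apply: csubN. Qed.
Lemma eq_mod_trans a b c : eq_mod P a b -> eq_mod P b c -> eq_mod P a c.
Proof. by move=> Pab Pbc; have := csubD Pab Pbc; rewrite /eq_mod addrA subrK. Qed.
Lemma eq_modD a b a' b' : eq_mod P a b -> eq_mod P a' b' ->
  eq_mod P (a + a') (b + b').
Proof. by move=> h h'; have := csubD h h'; rewrite /eq_mod opprD addrACA. Qed.
Lemma eq_modN a b : eq_mod P a b -> eq_mod P (- a) (- b).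
Proof. by move=> Pab; rewrite /eq_mod -opprD; apply: csubN. Qed.
Lemma eq_mod_circ a b l : eq_mod P a b -> eq_mod P (circ a l) (circ b l).
Proof. by move=> Pab; rewrite /eq_mod circB; apply: csub_circ. Qed.
Lemma eq_mod_Ksub a b : eqKbar a b -> eq_mod P a b.
Proof. exact: csub_Ksub. Qed.
Lemma csub_eq_mod a b : eq_mod P a b -> P b -> P a.
Proof. by move=> Pab Pb; have := csubD Pab Pb; rewrite subrK. Qed.

End ClosedSubgroup.

Lemma eqKbar_refl a : eqKbar a a.
Proof. exact: eq_mod_refl Ksub_closed a. Qed.

Lemma closed_span_closed S : closed_subgroup (closed_span sigma eps S).
Proof.
split=> [t Kt P cP _ |]; first exact: csub_Ksub.
split=> [a b Sa Sb P cP SP | t l St P cP SP].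
- by apply: csubB => //; [apply: Sa | apply: Sb].
- by apply: csub_circ => //; apply: St.
Qed.

Lemma closed_span_gen (S : K -> Prop) u : S u -> closed_span sigma eps S u.
Proof. by move=> Su P _ SP; apply: SP. Qed.

Lemma closed_span_ind (S P : K -> Prop) t : closed_subgroup P ->
  (forall u, S u -> P u) -> closed_span sigma eps S t -> P t.
Proof. by move=> cP SP; apply. Qed.

Lemma nontrivial_mulr_eq0 (P : K -> Prop) c :
  nontrivial_codefect P -> (forall m, P (c * m)) -> c = 0.
Proof.
move=> [t Pt] PcK; apply/eqP; apply: contraT => c_neq0; case: Pt.
by have := PcK (c^-1 * t); rewrite mulVKr //; apply: divK.
Qed.

(* The polarization t m + m^sigma t of l |-> t o l is congruent to
   (t + t^sigma eps) m modulo K_{sigma,eps}. *)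
Lemma closed_subgroup_Ksymm (P : K -> Prop) t :
  closed_subgroup P -> nontrivial_codefect P -> P t -> Ksymm sigma eps t.
Proof.
move=> cP ntP Pt; rewrite /Ksymm; apply/eqP; rewrite -addr_eq0; apply/eqP.
apply: (nontrivial_mulr_eq0 ntP) => m.
have polar : circ t (1 + m) - circ t 1 - circ t m = t * m + sigma m * t.
  rewrite /circ sigmaD sigma1 !mul1r !mulr1 !mulrDl !mulrDr !mul1r !mulr1.
  by rewrite -[t + _ + _]addrA (addrC t) addrK addrA addrK.
have Ppolar : P (t * m + sigma m * t).
  by rewrite -polar; do 2?apply: csubB => //; apply: csub_circ.
have Ptr := csub_Ksub cP (Ksub_trace (sigma m * t)).
have := csubB cP Ppolar Ptr; rewrite sigmaM -mulrA sigmaK_eps mulrA mulrDl.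
by rewrite opprB [_ - sigma m * t]addrC addrA addrK.
Qed.

Section QuadraticForm.
Variables (V : lmodType K^c) (R : K -> Prop) (qr : V -> K) (f : V -> V -> K).
Hypothesis quadq : gen_quadratic_form sigma eps R qr f.

Lemma codefect_closed : closed_subgroup R.
Proof. by case: quadq. Qed.
Lemma trace_valued_f : trace_valued_sesquilinear sigma eps f.
Proof. by case: quadq => _ []. Qed.
Lemma fDl x y z : f (x + y) z = f x z + f y z.
Proof. by case: trace_valued_f. Qed.
Lemma fDr x y z : f x (y + z) = f x y + f x z.
Proof. by case: trace_valued_f => _ []. Qed.
Lemma fZ x y l m : f (x *r l) (y *r m) = sigma l * f x y * m.
Proof. by case: trace_valued_f => _ [_ []]. Qed.
Lemma fC x y : f y x = sigma (f x y) * eps.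
Proof. by case: trace_valued_f => _ [_ [_ []]]. Qed.
Lemma qZ x l : eq_mod R (qr (x *r l)) (circ (qr x) l).
Proof. by case: quadq => _ [_ [qZ _]]; apply: qZ. Qed.
Lemma q_polar x y : R (qr (x + y) - qr x - qr y - f x y).
Proof. by case: quadq => _ [_ [_ qD]]; apply: qD. Qed.
Lemma qD x y : eq_mod R (qr (x + y)) (qr x + qr y + f x y).
Proof. by rewrite /eq_mod !opprD !addrA; apply: q_polar. Qed.
Lemma q0 : R (qr 0).
Proof. by have := qZ 0 0; rewrite rscale0 /eq_mod /circ !mulr0 subr0. Qed.

Lemma singularZ e l : R (qr e) -> R (qr (e *r l)).
Proof.
by move=> Re; exact: (csub_eq_mod codefect_closed (qZ e l) (csub_circ codefect_closed l Re)).
Qed.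

Hypothesis ntR : nontrivial_codefect R.

Lemma singular_form_self e : R (qr e) -> f e e = 0.
Proof.
move=> Re; apply: (nontrivial_mulr_eq0 ntR) => m.
have fe : f e (e *r m) = f e e * m by rewrite -{1}[e]rscale1 fZ sigma1 mul1r.
have := q_polar e (e *r m); rewrite -{1}[e]rscale1 -rscaleDl fe => polar.
have := csubB codefect_closed (singularZ (1 + m) Re) Re.
move/(csubB codefect_closed)/(_ (singularZ m Re)).
by move/(csubB codefect_closed)/(_ polar); rewrite subKr.
Qed.

Variables (d : Order.disp_t) (I : orderType d).

Section SesquilinearExpansion.
Variables (h : V -> V -> K) (C : I -> V).
Hypothesis hDl : forall x y z, h (x + y) z = h x z + h y z.
Hypothesis hDr : forall x y z, h x (y + z) = h x y + h x z.
Hypothesis hZ : forall x y l m, h (x *r l) (y *r m) = sigma l * h x y * m.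

Lemma form0l y : h 0 y = 0.
Proof. by apply: (@addrI _ (h 0 y)); rewrite -hDl !addr0. Qed.
Lemma form0r y : h y 0 = 0.
Proof. by apply: (@addrI _ (h y 0)); rewrite -hDr !addr0. Qed.

Lemma form_scale_comb x a (t : seq I) m :
  h (x *r a) (\sum_(j <- t) C j *r m j) = \sum_(j <- t) sigma a * h x (C j) * m j.
Proof.
elim: t => [|b t IH]; first by rewrite !big_nil form0r.
by rewrite !big_cons hDr IH hZ.
Qed.

Lemma form_sum_comb (s t : seq I) l m :
  h (\sum_(i <- s) C i *r l i) (\sum_(j <- t) C j *r m j) =
  \sum_(i <- s) \sum_(j <- t) sigma (l i) * h (C i) (C j) * m j.
Proof.
elim: s => [|a s IH]; first by rewrite !big_nil form0l.
by rewrite !big_cons hDl IH form_scale_comb.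
Qed.

End SesquilinearExpansion.

Section Basis.
Variable B : I -> V.
Hypothesis basisB : is_basis B.

Definition comb (s : seq I) (l : I -> K) : V := \sum_(i <- s) B i *r l i.
Definition upper_sum (s : seq I) (l m : I -> K) : K :=
  \sum_(i <- s) \sum_(j <- s | (i < j)%O) sigma (l i) * f (B i) (B j) * m j.
Definition extend (s : seq I) (l : I -> K) i := if i \in s then l i else 0.

Lemma comb_extend s S l : uniq s -> uniq S -> {subset s <= S} ->
  comb S (extend s l) = comb s l.
Proof.
move=> us uS sub; rewrite /comb -(big_mem_mask predT _ us uS sub).
by apply: eq_bigr => i _; rewrite /extend; case: ifP; rewrite ?rscale0.
Qed.

Lemma upper_sum_extend s S l m : uniq s -> uniq S -> {subset s <= S} ->
  upper_sum S (extend s l) (extend s m) = upper_sum s l m.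
Proof.
move=> us uS sub; rewrite /upper_sum -(big_mem_mask predT _ us uS sub).
apply: eq_bigr => i _; rewrite /extend; case: (boolP (i \in s)) => si.
  rewrite -(big_mem_mask _ _ us uS sub); apply: eq_bigr => j _.
  by case: ifP; rewrite ?mulr0.
by apply: big1 => j _; rewrite sigma0 !mul0r.
Qed.

Lemma sub_undup_catl (s s' : seq I) : {subset s <= undup (s ++ s')}.
Proof. by move=> i si; rewrite mem_undup mem_cat si. Qed.
Lemma sub_undup_catr (s s' : seq I) : {subset s' <= undup (s ++ s')}.
Proof. by move=> i si; rewrite mem_undup mem_cat si orbT. Qed.

Lemma extend_unique s s' l l' : uniq s -> uniq s' -> comb s l = comb s' l' ->
  extend s l =1 extend s' l'.
Proof.
move=> us us' e i; set S := undup (s ++ s').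
have uS : uniq S by apply: undup_uniq.
have S0 : \sum_(j <- S) B j *r (extend s l j - extend s' l' j) = 0.
  under eq_bigr do rewrite rscaleBl.
  have := comb_extend l us uS (@sub_undup_catl s s').
  have := comb_extend l' us' uS (@sub_undup_catr s s').
  by rewrite sumrB /comb => -> ->; move: e; rewrite /comb => ->; rewrite subrr.
case/boolP: (i \in S) => Si.
  by apply/eqP; rewrite -subr_eq0; apply/eqP; case: basisB => _ /(_ S _ uS S0); apply.
rewrite /extend !ifN //; apply: contra Si.
  exact: sub_undup_catr.
exact: sub_undup_catl.
Qed.

Lemma gE_rel_unique x y t t' :
  gE_rel sigma f B x y t -> gE_rel sigma f B x y t' -> t = t'.
Proof.
move=> [s [l [m [us -> -> ->]]]] [s' [l' [m' [us' ex ey ->]]]].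
set S := undup (s ++ s'); have uS : uniq S by apply: undup_uniq.
rewrite -/(upper_sum s l m) -/(upper_sum s' l' m').
rewrite -(upper_sum_extend l m us uS (@sub_undup_catl s s')).
rewrite -(upper_sum_extend l' m' us' uS (@sub_undup_catr s s')).
apply: eq_bigr => i _; apply: eq_bigr => j _.
by rewrite (extend_unique us us' ex) (extend_unique us us' ey).
Qed.

Lemma gE_comb s l m : uniq s -> gE sigma f B (comb s l) (comb s m) = upper_sum s l m.
Proof.
move=> us; have rel : gE_rel sigma f B (comb s l) (comb s m) (upper_sum s l m).
  by exists s, l, m.
exact: gE_rel_unique (epsilon_spec (inhabits 0) _ (ex_intro _ _ rel)) rel.
Qed.

Lemma comb_exists x : exists s l, uniq s /\ x = comb s l.
Proof.
case: basisB => + _ => /(_ x) [s [c ->]]; rewrite /comb.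
elim: s => [|a s [s' [c' [us' e]]]]; first by exists [::], c; rewrite !big_nil.
rewrite big_cons e; case/boolP: (a \in s') => sa.
  exists s', (fun i => if i == a then c' a + c a else c' i); split => //.
  rewrite !(bigD1_seq a sa us') /= eqxx rscaleDl addrA (addrC (B a *r c a)).
  by congr (_ + _); apply: eq_bigr => i /negbTE ->.
exists (a :: s'), (fun i => if i == a then c a else c' i); split.
  by rewrite /= sa us'.
rewrite big_cons eqxx; congr (_ + _); apply: eq_big_seq => i si.
by rewrite ifN //; apply: contraNneq sa => <-.
Qed.

Lemma comb_exists3 x y z : exists s a b c,
  [/\ uniq s, x = comb s a, y = comb s b & z = comb s c].
Proof.
have [s1 [a [u1 ->]]] := comb_exists x; have [s2 [b [u2 ->]]] := comb_exists y.
have [s3 [c [u3 ->]]] := comb_exists z.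
set S := undup (s1 ++ s2 ++ s3); have uS : uniq S by apply: undup_uniq.
exists S, (extend s1 a), (extend s2 b), (extend s3 c).
by split => //; symmetry; apply: comb_extend => // i si;
  rewrite mem_undup !mem_cat si ?orbT.
Qed.

Lemma combD s l m : comb s (fun i => l i + m i) = comb s l + comb s m.
Proof. by rewrite /comb -big_split; apply: eq_bigr => i _; rewrite rscaleDl. Qed.

Lemma combZ s l a : comb s l *r a = comb s (fun i => l i * a).
Proof.
rewrite /comb /rscale scaler_sumr; apply: eq_bigr => i _.
by rewrite -/(rscale _ _) rscaleA.
Qed.

Local Notation g := (gE sigma f B).

Lemma gEDl x y z : g (x + y) z = g x z + g y z.
Proof.
have [s [a [b [c [us -> -> ->]]]]] := comb_exists3 x y z.
rewrite -combD !gE_comb // -big_split; apply: eq_bigr => i _.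
by rewrite -big_split; apply: eq_bigr => j _; rewrite sigmaD !mulrDl.
Qed.

Lemma gEDr x y z : g x (y + z) = g x y + g x z.
Proof.
have [s [a [b [c [us -> -> ->]]]]] := comb_exists3 x y z.
rewrite -combD !gE_comb // -big_split; apply: eq_bigr => i _.
by rewrite -big_split; apply: eq_bigr => j _; rewrite mulrDr.
Qed.

Lemma gEZ x y l m : g (x *r l) (y *r m) = sigma l * g x y * m.
Proof.
have [s [a [b [c [us -> -> _]]]]] := comb_exists3 x y 0.
rewrite !combZ !gE_comb // mulr_sumr mulr_suml; apply: eq_bigr => i _.
by rewrite mulr_sumr mulr_suml; apply: eq_bigr => j _; rewrite sigmaM !mulrA.
Qed.

Lemma gE_basis_self i : g (B i) (B i) = 0.
Proof.
have -> : B i = comb [:: i] (fun _ => 1) by rewrite /comb big_seq1 rscale1.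
by rewrite gE_comb // /upper_sum !big_cons !big_nil /= ltxx !addr0.
Qed.

Hypothesis singularB : forall i, R (qr (B i)).

(* The diagonal terms f(e_i,e_i) vanish because the e_i are singular. *)
Lemma form_gE x y : f x y = g x y + sigma (g y x) * eps.
Proof.
have [s [a [b [c [us -> -> _]]]]] := comb_exists3 x y 0.
rewrite !gE_comb // /comb (form_sum_comb B fDl fDr fZ) (big_pairs_split _ us).
rewrite [X in _ + X + _]big1 ?addr0 => [|i _]; last first.
  by rewrite singular_form_self // mulr0 mul0r.
congr (_ + _); rewrite (exchange_big_dep predT) //= /upper_sum sigma_sum mulr_suml.
apply: eq_bigr => j _; rewrite sigma_sum mulr_suml; apply: eq_bigr => i _.
by rewrite sigma_circ_eps -fC.
Qed.

Lemma gE_polar_mod x y : eqKbar (g x y + g y x) (f x y).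
Proof.
rewrite form_gE; apply: (eq_modD Ksub_closed (eq_mod_refl Ksub_closed _)).
exact: Ksub_trace.
Qed.

Lemma q_gE x : eq_mod R (qr x) (g x x).
Proof.
have cR := codefect_closed.
have [s [c [_ ->]]] := comb_exists x; rewrite /comb.
elim: s => [|a s IH]; first by rewrite big_nil (form0l gEDl) /eq_mod subr0; apply: q0.
rewrite big_cons; set z := B a *r c a; set y := \sum_(i <- s) _.
have qz : eq_mod R (qr z) 0 by rewrite /eq_mod subr0; apply: singularZ.
have fzy : eq_mod R (f z y) (g z y + g y z).
  exact: (eq_mod_Ksub cR (eq_mod_sym Ksub_closed (gE_polar_mod z y))).
have gzz : g z z = 0 by rewrite gEZ gE_basis_self mulr0 mul0r.
rewrite gEDl !gEDr gzz add0r; apply: (eq_mod_trans cR (qD z y)).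
apply: (eq_mod_trans cR (eq_modD cR (eq_modD cR qz IH) fzy)).
by rewrite add0r addrC -addrA; apply: eq_mod_refl.
Qed.

End Basis.

Section ChangeOfBasis.
Variables E E' : I -> V.
Hypotheses (basisE : is_basis E) (basisE' : is_basis E').
Hypotheses (singularE : forall i, R (qr (E i))) (singularE' : forall i, R (qr (E' i))).

Local Notation g := (gE sigma f E).
Local Notation g' := (gE sigma f E').
Local Notation delta := (delta sigma f E E').
Local Notation span := (R_EE sigma eps f E E').

Lemma delta_additive x y : eqKbar (delta (x + y)) (delta x + delta y).
Proof.
have cK := Ksub_closed.
have sym : eqKbar (g x y + g y x) (g' x y + g' y x).
  exact: (eq_mod_trans cK (gE_polar_mod basisE singularE x y)
           (eq_mod_sym cK (gE_polar_mod basisE' singularE' x y))).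
rewrite /delta !(gEDl basisE) !(gEDr basisE) !(gEDl basisE') !(gEDr basisE').
rewrite (addr_shuffle (g x x)) (addr_shuffle (g' x x)) opprD addrACA.
have -> : g x x - g' x x + (g y y - g' y y) = g x x + g y y - (g' x x + g' y y) + 0.
  by rewrite addr0 opprD addrACA.
by apply: (eq_modD cK (eq_mod_refl cK _)); rewrite /eq_mod subr0.
Qed.

Lemma deltaZ x l : delta (x *r l) = circ (delta x) l.
Proof. by rewrite /delta (gEZ basisE) (gEZ basisE') -circB. Qed.

(* The strictly upper part of f on E, rewritten through g_{E'}, becomes the
   upper part of g_{E'} plus the trace-twisted lower part of g_{E'}. *)
Lemma upper_sum_mod s l : uniq s ->
  eqKbar (upper_sum E s l l)
    (g' (comb E s l) (comb E s l) - \sum_(i <- s) circ (g' (E i) (E i)) (l i)).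
Proof.
move=> us; have cK := Ksub_closed.
rewrite /comb (form_sum_comb E (gEDl basisE') (gEDr basisE') (gEZ basisE')).
rewrite (big_pairs_split _ us) /circ addrAC addrK.
set U := \sum_(p <- s) \sum_(q <- s | (p < q)%O) _.
set L := \sum_(p <- s) \sum_(q <- s | (q < p)%O) _.
have -> : upper_sum E s l l = U +
    \sum_(p <- s) \sum_(q <- s | (q < p)%O)
      sigma (sigma (l p) * g' (E p) (E q) * l q) * eps.
  rewrite (exchange_big_dep predT) //= -big_split; apply: eq_bigr => p _.
  rewrite -big_split; apply: eq_bigr => q _.
  by rewrite (form_gE basisE' singularE') mulrDr mulrDl sigma_circ_eps.
apply: (eq_modD cK (eq_mod_refl cK _)); rewrite /eq_mod /L -sumrB.
apply: (csub_sum cK) => p _; rewrite -sumrB; apply: (csub_sum cK) => q _.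
exact: (eq_mod_sym cK (Ksub_trace _)).
Qed.

Lemma delta_comb s l : uniq s ->
  eqKbar (delta (comb E s l)) (- \sum_(i <- s) circ (g' (E i) (E i)) (l i)).
Proof.
move=> us; have cK := Ksub_closed.
have := eq_modD cK (upper_sum_mod l us) (eq_mod_refl cK (- g' (comb E s l) (comb E s l))).
by rewrite /delta (gE_comb basisE) // addrAC subrr add0r.
Qed.

Lemma delta_in_span x : span (delta x).
Proof.
have cS := @closed_span_closed (fun u => exists i, u = g' (E i) (E i)).
have [s [l [us ->]]] := comb_exists basisE x.
apply: (csub_eq_mod cS (eq_mod_Ksub cS (delta_comb l us))).
apply: (csubN cS); apply: (csub_sum cS) => i _; apply: (csub_circ cS).
by apply: closed_span_gen; exists i.
Qed.

Lemma span_sub_codefect t : span t -> R t.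
Proof.
apply: closed_span_ind => [|_ [i ->]]; first exact: codefect_closed.
have qE := eq_mod_sym codefect_closed (q_gE basisE' singularE' (E i)).
exact: (csub_eq_mod codefect_closed qE (singularE i)).
Qed.

Lemma span_swap t : R_EE sigma eps f E' E t -> span t.
Proof.
apply: closed_span_ind => [|_ [i ->]]; first exact: closed_span_closed.
by have := delta_in_span (E' i); rewrite /delta (gE_basis_self basisE') subr0.
Qed.

Lemma delta0 : delta 0 = 0.
Proof. by rewrite /delta (form0l (gEDl basisE)) (form0l (gEDl basisE')) subrr. Qed.

Lemma deltaN x : eqKbar (delta (- x)) (- delta x).
Proof.
have cK := Ksub_closed.
have := eq_modD cK (eq_mod_sym cK (delta_additive x (- x))) (eq_mod_refl cK (- delta x)).
by rewrite subrr delta0 add0r addrC addKr.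
Qed.

Lemma delta_image_closed :
  closed_subgroup (fun t => exists x, eqKbar (delta x) t).
Proof.
have cK := Ksub_closed.
split=> [t Kt|].
  by exists 0; rewrite delta0; apply: (eq_mod_sym cK); rewrite /eq_mod subr0.
split=> [a b [x xa] [y yb] | t l [x xt]].
  exists (x - y); apply: (eq_mod_trans cK (delta_additive x (- y))).
  exact: (eq_modD cK xa (eq_mod_trans cK (deltaN y) (eq_modN cK yb))).
by exists (x *r l); rewrite deltaZ; apply: (eq_mod_circ cK l xt).
Qed.

Lemma delta_onto t : span t -> exists x, eqKbar (delta x) t.
Proof.
apply: (closed_span_ind delta_image_closed) => _ [i ->].
exists (- E i); apply: (eq_mod_trans Ksub_closed (deltaN (E i))).
by rewrite /delta (gE_basis_self basisE) sub0r opprK; apply: eqKbar_refl.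
Qed.

End ChangeOfBasis.
End QuadraticForm.
End Forms.

Theorem mainTheorem11
  (K : unitRingType) (sigma : K -> K) (eps : K)
  (V : lmodType K^c) (R : K -> Prop) (qr : V -> K) (f : V -> V -> K)
  (d : Order.disp_t) (I : orderType d) (E E' : I -> V) :
  division_ring K ->
  admissible_pair sigma eps ->
  gen_quadratic_form sigma eps R qr f ->
  nontrivial_codefect R ->
  is_basis E -> is_basis E' ->
  (forall i, q_singular R qr (E i)) ->
  (forall i, q_singular R qr (E' i)) ->
  subspace_of sigma eps R (R_EE sigma eps f E E') /\
      (forall x y, eqKbar sigma eps (delta sigma f E E' (x + y))
                     (delta sigma f E E' x + delta sigma f E E' y)) /\
      (forall x l, eqKbar sigma eps (delta sigma f E E' (x *r l))
                     (circ sigma (delta sigma f E E' x) l)) /\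
      ((forall x, R_EE sigma eps f E E' (delta sigma f E E' x)) /\
      (forall t, R_EE sigma eps f E E' t ->
         exists x, eqKbar sigma eps (delta sigma f E E' x) t)) /\
      (forall (s : seq I) (l : I -> K), uniq s ->
         eqKbar sigma eps (delta sigma f E E' (\sum_(i <- s) E i *r l i))
           (- \sum_(i <- s) circ sigma (gE sigma f E' (E i) (E i)) (l i))) /\
      (forall x, eqKbar sigma eps (delta sigma f E' E x)
                   (- delta sigma f E E' x)) /\
      (forall t, R_EE sigma eps f E E' t <-> R_EE sigma eps f E' E t).
Proof.
move=> divK adm quadq ntR basisE basisE' singE singE'.
have spanR := span_sub_codefect divK adm quadq ntR basisE' singE singE'.
split.
  split; first exact: closed_span_closed.
  split=> t /spanR //; exact: (closed_subgroup_Ksymm divK adm (codefect_closed quadq) ntR).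
split; first exact: (delta_additive divK adm quadq ntR basisE basisE' singE singE').
split=> [x l|]; first by rewrite (deltaZ adm f basisE basisE'); apply: eqKbar_refl.
split; first split.
- exact: (delta_in_span divK adm quadq ntR basisE basisE' singE').
- exact: (delta_onto divK adm quadq ntR basisE basisE' singE singE').
split; first exact: (delta_comb divK adm quadq ntR basisE basisE' singE').
split=> [x|]; first by rewrite /delta opprB; apply: eqKbar_refl.
split; first exact: (span_swap divK adm quadq ntR basisE' basisE singE).
exact: (span_swap divK adm quadq ntR basisE basisE' singE').
Qed.
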